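(* Let $\mathcal{AF}_{\vdash}=(\vdash,\overline{\cdot},\widehat{\cdot})$ be a setting and let $\vdash^{\emptyset}$ be the restriction of $\vdash$ to pairs $(\Gamma,\gamma)$ for which there is no $(\emptyset,\delta)\in{\vdash}$ with $\delta\in\overline{\psi}$ for some $\psi\in\widehat{\Gamma}$. If the setting $(\vdash^{\emptyset},\overline{\cdot},\widehat{\cdot})$ satisfies Pre-Relevance, then for each $\mathsf{Sem}\in\{\mathsf{Grd},\mathsf{Prf}\}$ the relation $\mathrel{\mid\!\sim}^{\mathcal{AF}_{\vdash}}_{\mathsf{Sem}}$ satisfies Non-Interference: for all $\mathcal{S}_1\cup\{\phi\}\cup\mathcal{S}_2\subseteq\mathcal{L}$ with $(\mathcal{S}_1\cup\{\phi\})\mid\mathcal{S}_2$, $\mathcal{S}_1\mathrel{\mid\!\sim}^{\mathcal{AF}_{\vdash}}_{\mathsf{Sem}}\phi$ iff $\mathcal{S}_1\cup\mathcal{S}_2\mathrel{\mid\!\sim}^{\mathcal{AF}_{\vdash}}_{\mathsf{Sem}}\phi$.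
   Context: $\mathcal{L}$ is the set of formulas of a language built from propositional atoms; $\mathsf{Atoms}(\mathcal{S})$ is the set of atoms occurring in $\mathcal{S}$, and $\mathcal{S}_1\mid\mathcal{S}_2$ means $\mathsf{Atoms}(\mathcal{S}_1)\cap\mathsf{Atoms}(\mathcal{S}_2)=\emptyset$. A setting is $(\vdash,\overline{\cdot},\widehat{\cdot})$ with ${\vdash}\subseteq\wp_{\sf fin}(\mathcal{L})\times\mathcal{L}$ arbitrary, $\overline{\cdot}:\mathcal{L}\to\wp(\mathcal{L})$, $\widehat{\cdot}$ assigning to each nonempty finite set of formulas a finite set of formulas, with $\widehat{\emptyset}=\emptyset$. $\mathit{Arg}_{\vdash}(\mathcal{S})=\{(\Gamma,\gamma):\Gamma\subseteq\mathcal{S}\text{ finite},\Gamma\vdash\gamma\}$; in $\mathcal{AF}_{\vdash}(\mathcal{S})$, $(\Gamma,\gamma)$ attacks $(\Gamma',\gamma')$ iff $\gamma\in\overline{\phi}$ for some $\phi\in\widehat{\Gamma'}$. Dung semantics: conflict-free, defends, admissible, complete (admissible and contains all it defends), preferred ($\subseteq$-maximal complete), grounded ($\subseteq$-minimal complete). $\mathcal{S}\mathrel{\mid\!\sim}^{\mathcal{AF}}_{\mathsf{Sem}}\phi$ iff every $\mathsf{Sem}$-extension of $\mathcal{AF}(\mathcal{S})$ contains an argument with conclusion $\phi$. A setting satisfies Pre-Relevance iff (a) for all $\mathcal{S}_1,\mathcal{S}_2,\phi$ with $\mathcal{S}_1\cup\{\phi\}\mid\mathcal{S}_2$, $\mathcal{S}_1\cup\mathcal{S}_2\vdash\phi$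 implies $\mathcal{S}_1'\vdash\phi$ for some $\mathcal{S}_1'\subseteq\mathcal{S}_1$; (b) it is prime: for all sets of atoms $\mathcal{A}_1\mid\mathcal{A}_2$, all finite $\mathcal{S}_1,\mathcal{T}_1,\mathcal{S}_2,\mathcal{T}_2$ with $\mathsf{Atoms}(\mathcal{S}_i),\mathsf{Atoms}(\mathcal{T}_i)\subseteq\mathcal{A}_i$, and all $\phi,\psi$ with $\psi\in\overline{\phi}$, $\phi\in\widehat{\mathcal{T}_1\cup\mathcal{T}_2}$: if $\mathcal{S}_1\cup\mathcal{S}_2\vdash\psi$ then there are $i\in\{1,2\}$, $\mathcal{S}_i'\subseteq\mathcal{S}_i$, $\phi_i\in\widehat{\mathcal{T}_i}$, $\psi_i\in\overline{\phi_i}$ with $\mathcal{S}_i'\vdash\psi_i$; (c) $\widehat{\Delta}\subseteq\widehat{\Delta\cup\Delta'}$ for all finite $\Delta,\Delta'$. *)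

From mathcomp Require Import all_boot.
From mathcomp Require Import finmap.

Set Implicit Arguments.
Unset Strict Implicit.
Unset Printing Implicit Defensive.

Local Open Scope fset_scope.

Section Defs.

(* The language: an arbitrary type of formulas L together with the relation
   "atom p occurs in formula psi". *)
Variables (L : choiceType) (Atom : Type) (atoms : L -> Atom -> Prop).

(* (possibly infinite) sets of formulas are predicates on L *)
Definition fs (G : {fset L}) : L -> Prop := fun x => x \in G.

Definition AtomsS (S : L -> Prop) : Atom -> Prop :=
  fun p => exists psi, S psi /\ atoms psi p.

(* S1 | S2 : no shared atoms *)
Definition atom_disjoint (S1 S2 : L -> Prop) : Prop :=
  forall p, AtomsS S1 p -> AtomsS S2 p -> False.

Definition setU (S1 S2 : L -> Prop) : L -> Prop := fun x => S1 x \/ S2 x.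
Definition setU1 (S : L -> Prop) (phi : L) : L -> Prop := fun x => S x \/ x = phi.

Record setting := Setting {
  vdash : {fset L} -> L -> Prop;
  over  : L -> L -> Prop;            (* over phi psi  <->  psi \in overline(phi) *)
  hat   : {fset L} -> {fset L};
  hat0  : hat fset0 = fset0 }.

Definition argument := ({fset L} * L)%type.

Definition Arg (st : setting) (S : L -> Prop) (a : argument) : Prop :=
  (forall x, x \in a.1 -> S x) /\ vdash st a.1 a.2.

Definition attacks (st : setting) (a b : argument) : Prop :=
  exists phi, phi \in hat st b.1 /\ over st phi a.2.

Section Dung.
Variables (st : setting) (S : L -> Prop).
Let A := Arg st S.
Let att := attacks st.

Definition conflict_free (E : argument -> Prop) : Prop :=
  forall a b, E a -> E b -> ~ att a b.

Definition defends (E : argument -> Prop) (a : argument) : Prop :=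
  forall b, A b -> att b a -> exists c, E c /\ att c b.

Definition admissible (E : argument -> Prop) : Prop :=
  (forall a, E a -> A a) /\ conflict_free E /\ (forall a, E a -> defends E a).

Definition complete (E : argument -> Prop) : Prop :=
  admissible E /\ (forall a, A a -> defends E a -> E a).

Definition subsetA (E F : argument -> Prop) := forall a, E a -> F a.

Definition preferred (E : argument -> Prop) : Prop :=
  complete E /\ (forall F, complete F -> subsetA E F -> subsetA F E).

Definition grounded (E : argument -> Prop) : Prop :=
  complete E /\ (forall F, complete F -> subsetA F E -> subsetA E F).
End Dung.

Inductive sem := Grd | Prf.

Definition is_ext (Sm : sem) (st : setting) (S : L -> Prop) (E : argument -> Prop) :=
  match Sm with
  | Grd => grounded st S E
  | Prf => preferred st S E
  end.

Definition entails (st : setting) (Sm : sem) (S : L -> Prop) (phi : L) : Prop :=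
  forall E, is_ext Sm st S E -> exists a, E a /\ a.2 = phi.

Definition vdash_empty (st : setting) (G : {fset L}) (g : L) : Prop :=
  vdash st G g /\
  ~ (exists delta, vdash st fset0 delta /\
       exists psi, psi \in hat st G /\ over st psi delta).

Definition restrict_empty (st : setting) : setting :=
  @Setting (vdash_empty st) (over st) (hat st) (hat0 st).

Definition pre_relevance (st : setting) : Prop :=
  (forall (S1 S2 : {fset L}) (phi : L),
      atom_disjoint (setU1 (fs S1) phi) (fs S2) ->
      vdash st (S1 `|` S2) phi ->
      exists S1' : {fset L}, S1' `<=` S1 /\ vdash st S1' phi) /\
  (forall (A1 A2 : Atom -> Prop), (forall p, A1 p -> A2 p -> False) ->
   forall (S1 T1 S2 T2 : {fset L}),
     (forall p, AtomsS (fs S1) p -> A1 p) ->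
     (forall p, AtomsS (fs T1) p -> A1 p) ->
     (forall p, AtomsS (fs S2) p -> A2 p) ->
     (forall p, AtomsS (fs T2) p -> A2 p) ->
   forall phi psi, over st phi psi -> phi \in hat st (T1 `|` T2) ->
     vdash st (S1 `|` S2) psi ->
     (exists S1' phi1 psi1, S1' `<=` S1 /\ phi1 \in hat st T1 /\
         over st phi1 psi1 /\ vdash st S1' psi1) \/
     (exists S2' phi2 psi2, S2' `<=` S2 /\ phi2 \in hat st T2 /\
         over st phi2 psi2 /\ vdash st S2' psi2)) /\
  (forall D D' : {fset L}, hat st D `<=` hat st (D `|` D')).

Definition non_interference (st : setting) (Sm : sem) : Prop :=
  forall (S1 S2 : L -> Prop) (phi : L),
    atom_disjoint (setU1 S1 phi) S2 ->
    (entails st Sm S1 phi <-> entails st Sm (setU S1 S2) phi).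

End Defs.

From Pilot Require Import Defs.
From mathcomp Require Import all_boot finmap boolp classical_sets.

Set Implicit Arguments.
Unset Strict Implicit.
Unset Printing Implicit Defensive.

(* Arguments with empty premises cannot be attacked (hat fset0 = fset0), so they
   belong to every complete extension; an argument they attack can neither be
   defended nor needs to be defended against.  Hence AF_|-(S) and AF_|-^0(S)
   have the same complete extensions, and it suffices to derive Non-Interference
   from Pre-Relevance of the setting itself.
   There, primeness turns an attack on an argument with premises in S1 into an
   attack by an argument built from the S1-part of the attacker's premises,
   condition (a) does the same for arguments concluding phi, and condition (c)
   closes complete extensions under shrinking premises.  So the grounded
   extension over S1 is the S1-part of the one over S1 u S2, and preferred
   extensions are transferred in both directions by restricting them to
   S1-premises or taking unions, then extending to a maximal admissible set. *)

Section Dung.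
Variables (L : choiceType) (st : setting L) (S : L -> Prop).
Implicit Types (E F : set (argument L)) (a b c : argument L).
Local Open Scope classical_set_scope.

Lemma attacks_fset0 b g : ~ attacks st b (fset0, g).
Proof. by case=> p [/=]; rewrite hat0 in_fset0. Qed.

Lemma Arg_fset0 g : vdash st fset0 g -> Arg st S (fset0, g).
Proof. by split=> // x; rewrite in_fset0. Qed.

Lemma complete_fset0 E g : complete st S E -> vdash st fset0 g -> E (fset0, g).
Proof. by move=> [_ cE] /Arg_fset0 A0; apply: cE => // b _ /attacks_fset0. Qed.

Lemma defends_fset0 E a g : defends st S E a -> vdash st fset0 g ->
  ~ attacks st (fset0, g) a.
Proof. by move=> dE /Arg_fset0 A0 /(dE _ A0) [c [_ /attacks_fset0]]. Qed.

Lemma defends_mono E F a : subsetA E F -> defends st S E a -> defends st S F a.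
Proof. by move=> EF dE b Ab /(dE b Ab) [c [/EF Fc cb]]; exists c. Qed.

Lemma admissible_add E a : admissible st S E -> Arg st S a -> defends st S E a ->
  admissible st S (fun x => E x \/ x = a).
Proof.
move=> [EA [cfE dE]] Aa da.
have E_no_att_a x : E x -> ~ attacks st x a.
  by move=> Ex /(da x (EA x Ex)) [c [Ec cx]]; apply: cfE cx.
have a_no_att_E x : E x -> ~ attacks st a x.
  by move=> Ex /(dE x Ex a Aa) [c [Ec ca]]; apply: E_no_att_a ca.
split; [|split].
- by move=> x [/EA|->].
- move=> x y [Ex|->] [Ey|->]; first exact: cfE.
  + exact: E_no_att_a.
  + exact: a_no_att_E.
  + by move=> /(da a Aa) [c [Ec ca]]; apply: E_no_att_a ca.
- by move=> x [/dE|->]; [|move: da]; apply: defends_mono => y; left.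
Qed.

Lemma admissible_bigcup (C : set (set (argument L))) :
  (forall X, C X -> admissible st S X) -> total_on C subset ->
  admissible st S (\bigcup_(X in C) X).
Proof.
move=> adC totC; split; [|split].
- by move=> a [X /adC [XA _] /XA].
- move=> a b [X CX Xa] [Y CY Yb].
  have [XY|YX] := totC X Y CX CY.
  + by have [_ [cfY _]] := adC Y CY; apply: cfY (XY a Xa) Yb.
  + by have [_ [cfX _]] := adC X CX; apply: cfX Xa (YX b Yb).
- move=> a [X CX Xa]; have [_ [_ dX]] := adC X CX.
  by apply: defends_mono (dX a Xa) => x Xx; exists X.
Qed.

Lemma maximal_admissible_preferred E : admissible st S E ->
  (forall F, admissible st S F -> subsetA E F -> subsetA F E) -> preferred st S E.
Proof.
move=> adE maxE; have cE : complete st S E.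
  split=> // a Aa dEa.
  by apply: (maxE _ (admissible_add adE Aa dEa)) => [x|]; [left|right].
by split=> // F [adF _]; apply: maxE.
Qed.

Lemma preferred_extension E0 : admissible st S E0 ->
  exists2 E, preferred st S E & subsetA E0 E.
Proof.
(* Zorn on the X with X `|` E0 admissible; adding set0 to a chain lets `|` E0
   commute with its union. *)
move=> ad0; pose P X := admissible st S (X `|` E0).
have [C PC totC|M [PM maxM]] := @Zorn_bigcup _ P.
  pose C0 := set0 |` C.
  have tot0 : total_on C0 subset.
    by move=> X Y [->|CX] [->|CY]; [left|left|right|apply: totC].
  rewrite /P; have -> : \bigcup_(X in C) X `|` E0 = \bigcup_(Y in (setU^~ E0) @` C0) Y.
    by rewrite bigcup_image bigcupUl ?bigcup_setU1 ?set0U //; exists set0; left.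
  apply: admissible_bigcup => [_ [X [->|CX] <-]|_ _ [X CX <-] [Y CY <-]].
  - by rewrite set0U.
  - exact: PC.
  - by have [XY|YX] := tot0 X Y CX CY; [left|right]; apply: setSU.
exists (M `|` E0); last by move=> a; right.
apply: maximal_admissible_preferred => // F adF MF a Fa.
apply: contrapT => nMa; apply: (maxM F).
  split; first by move=> x Mx; apply: MF; left.
  by move=> FM; apply: nMa; left; apply: FM.
by rewrite /P setUidl // => x E0x; apply: MF; right.
Qed.

Definition defense_closed E := forall a, Arg st S a -> defends st S E a -> E a.

Definition grounded_ext : set (argument L) :=
  fun a => forall X, defense_closed X -> X a.

Lemma grounded_ext_closed : defense_closed grounded_ext.
Proof.
by move=> a Aa da X cX; apply: (cX) => //; apply: defends_mono da => b /(_ X cX).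
Qed.

Lemma grounded_ext_sub_complete E : complete st S E -> subsetA grounded_ext E.
Proof. by move=> [_ cE] a /(_ E cE). Qed.

Lemma grounded_ext_defended a :
  grounded_ext a -> Arg st S a /\ defends st S grounded_ext a.
Proof.
move/(_ (fun b => Arg st S b /\ defends st S grounded_ext b)); apply=> b Ab db.
by split=> //; apply: defends_mono db => c [Ac dc]; apply: grounded_ext_closed.
Qed.

Lemma grounded_ext_conflict_free : conflict_free st grounded_ext.
Proof.
pose Z a := grounded_ext a /\ (forall b, grounded_ext b -> ~ attacks st b a) /\
            (forall b, grounded_ext b -> ~ attacks st a b).
suff Gz a : grounded_ext a -> Z a by move=> a b /Gz [_ [_ aG]] /aG.
apply=> {}a Aa da.
have Ga : grounded_ext a.
  by apply: grounded_ext_closed => //; apply: defends_mono da => b [].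
have G_no_att_a b : grounded_ext b -> ~ attacks st b a.
  move=> Gb ba; have [Ab _] := grounded_ext_defended Gb.
  by have [c [[_ [_ cG]] cb]] := da b Ab ba; apply: cG cb.
split=> //; split=> // b Gb ab.
have [_ db] := grounded_ext_defended Gb.
by have [c [Gc ca]] := db a Aa ab; apply: G_no_att_a ca.
Qed.

Lemma grounded_ext_grounded : grounded st S grounded_ext.
Proof.
have cG : complete st S grounded_ext.
  split; last exact: grounded_ext_closed.
  split; first by move=> a /grounded_ext_defended [].
  split; first exact: grounded_ext_conflict_free.
  by move=> a /grounded_ext_defended [].
by split=> // E cE _; apply: grounded_ext_sub_complete.
Qed.

Lemma entails_GrdE phi :
  entails st Grd S phi <-> exists2 a, grounded_ext a & a.2 = phi.
Proof.
split=> [/(_ _ grounded_ext_grounded) [a [Ga <-]]|[a Ga <-] E [cE _]].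
  by exists a.
by exists a; split=> //; apply: grounded_ext_sub_complete.
Qed.

End Dung.

Section RestrictEmpty.
Variables (L : choiceType) (st : setting L) (S : L -> Prop).
Local Notation st' := (restrict_empty st).

Lemma vdash_restrict_empty_fset0 g : vdash st fset0 g -> vdash st' fset0 g.
Proof. by split=> // -[d [_ [p [/=]]]]; rewrite hat0 in_fset0. Qed.

Lemma Arg_restrict_emptyE a : Arg st' S a <->
  Arg st S a /\ forall g, vdash st fset0 g -> ~ attacks st (fset0, g) a.
Proof.
split=> [[aS [va na]]|[[aS va] na]].
  by split=> // g vg [p [pa pg]]; apply: na; exists g; split=> //; exists p.
by split=> //; split=> // -[g [vg [p [pa pg]]]]; apply: (na g vg); exists p.
Qed.

Lemma defends_restrict_empty E : (forall g, vdash st fset0 g -> E (fset0, g)) ->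
  forall a, defends st S E a <-> defends st' S E a.
Proof.
move=> E0 a; split=> dE b Ab ba; first by apply: dE ba; case/Arg_restrict_emptyE: Ab.
have [Ab'|] := pselect (Arg st' S b); first exact: dE.
rewrite Arg_restrict_emptyE => /not_andP [//|].
move=> /existsNP [g /not_implyP [vg /contrapT gb]].
by exists (fset0, g); split; [apply: E0|].
Qed.

Lemma complete_restrict_empty E : complete st S E <-> complete st' S E.
Proof.
split=> [cE|cE'].
- have E0 g : vdash st fset0 g -> E (fset0, g) by apply: complete_fset0 cE.
  have [[EA [cfE dE]] cc] := cE.
  split; first split.
  + move=> a Ea; apply/Arg_restrict_emptyE; split; first exact: EA.
    by move=> g; apply: defends_fset0 (dE a Ea).
  + by split=> // a /dE /(defends_restrict_empty E0).
  + move=> a /Arg_restrict_emptyE [Aa _] /(defends_restrict_empty E0) da.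
    exact: cc.
- have E0 g : vdash st fset0 g -> E (fset0, g).
    by move/vdash_restrict_empty_fset0; apply: complete_fset0 cE'.
  have [[EA [cfE dE]] cc] := cE'.
  split; first split.
  + by move=> a /EA /Arg_restrict_emptyE [].
  + by split=> // a /dE /(defends_restrict_empty E0).
  + move=> a Aa da; apply: cc; last exact/(defends_restrict_empty E0).
    by apply/Arg_restrict_emptyE; split=> // g; apply: defends_fset0 da.
Qed.

Lemma entails_restrict_empty Sm phi : entails st Sm S phi <-> entails st' Sm S phi.
Proof.
suff extE E : is_ext Sm st S E <-> is_ext Sm st' S E by split=> H E /extE /H.
by case: Sm => /=; split=> -[cE m]; split=> [|F /complete_restrict_empty cF];
  apply/complete_restrict_empty || apply: m.
Qed.

End RestrictEmpty.

Section Premises.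
Variable L : choiceType.
Local Open Scope fset_scope.

Definition premises_in (P : L -> Prop) : set (argument L) :=
  fun a => forall x, x \in a.1 -> P x.

Definition fsep (P : L -> Prop) (G : {fset L}) : {fset L} :=
  [fset x in G | `[< P x >]].

Lemma fsep_sub P G : fsep P G `<=` G.
Proof. by apply/fsubsetP => x; rewrite !inE => /andP []. Qed.

Lemma fsepP P G x : x \in fsep P G -> P x.
Proof. by rewrite !inE => /andP [_ /asboolP]. Qed.

Lemma fsep_split P G : fsep P G `|` fsep (fun x => ~ P x) G = G.
Proof. by apply/fsetP => x; rewrite !inE asbool_neg -andb_orr orbN andbT. Qed.

Lemma fsepN_setU (S1 S2 : L -> Prop) G : (forall x, x \in G -> S1 x \/ S2 x) ->
  forall x, x \in fsep (fun y => ~ S1 y) G -> S2 x.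
Proof.
by move=> GS x xG; case: (GS x (fsubsetP (fsep_sub _ _) x xG)) => // /(fsepP xG).
Qed.

Lemma Arg_mono (st : setting L) (S T : L -> Prop) a :
  (forall x, S x -> T x) -> Arg st S a -> Arg st T a.
Proof. by move=> ST [aS va]; split=> // x /aS /ST. Qed.

Variables (Atom : Type) (atoms : L -> Atom -> Prop).

Lemma AtomsS_mono (S T : L -> Prop) :
  (forall x, S x -> T x) -> forall p, AtomsS atoms S p -> AtomsS atoms T p.
Proof. by move=> ST p [x [/ST Tx xp]]; exists x. Qed.

Lemma atom_disjoint_mono (S S' T T' : L -> Prop) :
  (forall x, S x -> S' x) -> (forall x, T x -> T' x) ->
  atom_disjoint atoms S' T' -> atom_disjoint atoms S T.
Proof.
by move=> SS' TT' dST' p /(AtomsS_mono SS') Sp /(AtomsS_mono TT'); apply: dST'.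
Qed.

End Premises.

Section PreRelevance.
Local Open Scope fset_scope.
Variables (L : choiceType) (Atom : Type) (atoms : L -> Atom -> Prop) (st : setting L).
Hypothesis PR : pre_relevance atoms st.
Variables S1 S2 : L -> Prop.
Hypothesis S12 : atom_disjoint atoms S1 S2.
Local Notation S := (Defs.setU S1 S2).
Implicit Types (E P : set (argument L)) (a b c : argument L).

Lemma hat_mono G G' : G `<=` G' -> {subset hat st G <= hat st G'}.
Proof. by have [_ [_ PRc]] := PR; move=> /fsetUidPr <-; apply/fsubsetP. Qed.

Lemma attacks_mono c a b : a.1 `<=` b.1 -> attacks st c a -> attacks st c b.
Proof. by move=> ab [p [pa pc]]; exists p; split=> //; apply: hat_mono pa. Qed.

Lemma Arg_setUl a : Arg st S1 a -> Arg st S a.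
Proof. by apply: Arg_mono => x; left. Qed.

Lemma attack_localize b a : Arg st S b -> premises_in S1 a -> attacks st b a ->
  exists b', [/\ Arg st S1 b', b'.1 `<=` b.1 & attacks st b' a].
Proof.
move=> [bS vb] aS [p [pa pb]]; have [_ [PRb _]] := PR.
have vb' : vdash st (fsep S1 b.1 `|` fsep (fun x => ~ S1 x) b.1) b.2.
  by rewrite fsep_split.
have pa' : p \in hat st (a.1 `|` fset0) by rewrite fsetU0.
have fset0_S2 x : fs fset0 x -> S2 x by rewrite /fs in_fset0.
case: (PRb _ _ S12 (fsep S1 b.1) a.1 (fsep (fun x => ~ S1 x) b.1) fset0
  (AtomsS_mono (@fsepP _ _ _)) (AtomsS_mono aS) (AtomsS_mono (fsepN_setU bS))
  (AtomsS_mono fset0_S2) p b.2 pb pa' vb').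
- move=> [G [q [g [GS1 [qa [qg vg]]]]]]; exists (G, g); split.
  + by split=> // x /(fsubsetP GS1) /fsepP.
  + exact: fsubset_trans GS1 (fsep_sub _ _).
  + by exists q.
- by move=> [G [q [g [_ [+ _]]]]]; rewrite hat0 in_fset0.
Qed.

Lemma complete_sub_premises E a b :
  complete st S E -> E a -> Arg st S b -> b.1 `<=` a.1 -> E b.
Proof.
move=> [[_ [_ dE]] cE] Ea Ab ba; apply: cE => // c Ac cb.
exact: dE a Ea c Ac (attacks_mono ba cb).
Qed.

Lemma defends_setUl E a :
  premises_in S1 a -> defends st S1 E a -> defends st S E a.
Proof.
move=> aS dE b Ab /(attack_localize Ab aS) [b' [Ab' b'b /(dE _ Ab') [c [Ec cb']]]].
by exists c; split=> //; apply: attacks_mono cb'.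
Qed.

Lemma admissible_setUl E : admissible st S1 E -> admissible st S E.
Proof.
move=> [EA [cfE dE]]; split; first by move=> a /EA /Arg_setUl.
by split=> // a Ea; apply: defends_setUl (dE a Ea); case: (EA a Ea).
Qed.

Lemma admissible_complete_restrict E :
  complete st S E -> admissible st S1 (E `&` premises_in S1)%classic.
Proof.
move=> cE; have [[EA [cfE dE]] _] := cE.
split; first by move=> a [/EA [_ va] aS].
split; first by move=> a b [Ea _] [Eb _]; apply: cfE.
move=> a [Ea _] b [bS vb] ba.
have [c [Ec cb]] := dE a Ea b (Arg_setUl (conj bS vb)) ba.
have [c' [Ac' c'c c'b]] := attack_localize (EA c Ec) bS cb.
exists c'; split=> //; split; last by case: Ac'.
exact: complete_sub_premises cE Ec (Arg_setUl Ac') c'c.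
Qed.

Lemma admissible_setU_restrict E P : complete st S E -> admissible st S1 P ->
  subsetA (E `&` premises_in S1)%classic P -> admissible st S (E `|` P)%classic.
Proof.
move=> cE adP EP; have [[EA [cfE dE]] _] := cE; have [PA [cfP _]] := adP.
have E_no_att_P e q : E e -> P q -> ~ attacks st e q.
  move=> Ee Pq /(attack_localize (EA e Ee) (proj1 (PA q Pq))) [e' [Ae' e'e e'q]].
  have Ee' : E e' := complete_sub_premises cE Ee (Arg_setUl Ae') e'e.
  by apply: cfP e'q => //; apply: EP; split=> //; case: Ae'.
have [_ [_ dP]] := admissible_setUl adP.
split; first by move=> a [/EA|/PA /Arg_setUl].
split.
- move=> x y [Ex|Px] [Ey|Py]; [exact: cfE|exact: E_no_att_P| |exact: cfP].
  move=> /(dE y Ey x (Arg_setUl (PA x Px))) [c [Ec cx]].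
  exact: E_no_att_P Ec Px cx.
- by move=> a [/dE|/dP]; apply: defends_mono => x; [left|right].
Qed.

Lemma grounded_ext_setUl : subsetA (grounded_ext st S1) (grounded_ext st S).
Proof.
move=> a /(_ (fun a => Arg st S1 a /\ grounded_ext st S a)) [] // {}a Aa da.
split=> //; apply: grounded_ext_closed; first exact: Arg_setUl.
by apply: defends_setUl (proj1 Aa) _; apply: defends_mono da => x [].
Qed.

Lemma grounded_ext_restrict :
  subsetA (grounded_ext st S `&` premises_in S1)%classic (grounded_ext st S1).
Proof.
(* The invariant covers all S1-arguments with smaller premises, because the
   defenders produced by attack_localize have smaller premises. *)
pose Z a := Arg st S a /\
  forall a', Arg st S1 a' -> a'.1 `<=` a.1 -> grounded_ext st S1 a'.
move=> a [/(_ Z) Za aS]; have [[_ va] Z_sub] : Z a.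
  apply: Za => {aS}a Aa da; split=> // a' Aa' a'a.
  apply: grounded_ext_closed => // b Ab /(attacks_mono a'a) ba.
  have [c [[Ac Zc] cb]] := da b (Arg_setUl Ab) ba.
  have [c' [Ac' c'c c'b]] := attack_localize Ac (proj1 Ab) cb.
  by exists c'; split=> //; apply: Zc.
exact: Z_sub (conj aS va) (fsubset_refl _).
Qed.

Variable phi : L.

Lemma entails_Prf_setUl : entails st Prf S1 phi -> entails st Prf S phi.
Proof.
move=> H E [cE maxE].
have [P1 prefP1 EP1] := preferred_extension (admissible_complete_restrict cE).
have [p [P1p p_phi]] := H P1 prefP1.
have [Q [cQ _] EP1Q] :=
  preferred_extension (admissible_setU_restrict cE (proj1 (proj1 prefP1)) EP1).
by exists p; split=> //; apply: (maxE Q cQ _ p) => [x Ex|]; apply: EP1Q; [left|right].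
Qed.

Hypothesis S1phi_S2 : atom_disjoint atoms (setU1 S1 phi) S2.

Lemma Arg_localize G :
  Arg st S (G, phi) -> exists2 G', G' `<=` G & Arg st S1 (G', phi).
Proof.
move=> [GS vG]; have [PRa _] := PR.
have dis : atom_disjoint atoms
    (setU1 (fs (fsep S1 G)) phi) (fs (fsep (fun x => ~ S1 x) G)).
  apply: (atom_disjoint_mono _ (fsepN_setU GS) S1phi_S2) => x.
  by case=> [/fsepP|->]; [left|right].
have vG' : vdash st (fsep S1 G `|` fsep (fun x => ~ S1 x) G) phi.
  by rewrite fsep_split.
have [G' [G'G vG'']] := PRa _ _ phi dis vG'.
exists G'; first exact: fsubset_trans G'G (fsep_sub _ _).
by split=> // x /(fsubsetP G'G) /fsepP.
Qed.

Lemma complete_localize E a : complete st S E -> E a -> a.2 = phi ->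
  exists2 a', (E `&` premises_in S1)%classic a' & a'.2 = phi.
Proof.
case: a => G g cE Ea /= g_phi; subst g; have [[EA _] _] := cE.
have [G' G'G [G'S1 vG']] := Arg_localize (EA _ Ea).
exists (G', phi) => //; split=> //.
exact: complete_sub_premises cE Ea (Arg_setUl (conj G'S1 vG')) G'G.
Qed.

Lemma entails_Grd_setU : entails st Grd S1 phi <-> entails st Grd S phi.
Proof.
rewrite !entails_GrdE; split=> [[a /grounded_ext_setUl Ga <-]|[a Ga a_phi]].
  by exists a.
have [a' Ga' <-] := complete_localize (proj1 (grounded_ext_grounded st S)) Ga a_phi.
by exists a'; first exact: grounded_ext_restrict.
Qed.

Lemma entails_Prf_setUr : entails st Prf S phi -> entails st Prf S1 phi.
Proof.
move=> H E1 [[adE1 _] maxE1].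
have [E prefE E1E] := preferred_extension (admissible_setUl adE1).
have [a [Ea a_phi]] := H E prefE.
have [a' Ea' a'_phi] := complete_localize (proj1 prefE) Ea a_phi.
have [P [cP _] EP] := preferred_extension (admissible_complete_restrict (proj1 prefE)).
exists a'; split=> //; apply: (maxE1 P cP _ a') => [x E1x|]; apply: EP => //.
by split; [apply: E1E|case: (proj1 adE1 x E1x)].
Qed.

End PreRelevance.

Lemma non_interference_of_pre_relevance (L : choiceType) (Atom : Type)
  (atoms : L -> Atom -> Prop) (st : setting L) :
  pre_relevance atoms st -> forall Sm, non_interference atoms st Sm.
Proof.
move=> PR Sm S1 S2 phi S1phi_S2.
have S12 : atom_disjoint atoms S1 S2.
  by apply: (atom_disjoint_mono _ _ S1phi_S2) => x xS; [left|].
case: Sm; first exact: (entails_Grd_setU PR S12 S1phi_S2).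
split; [exact: (entails_Prf_setUl PR S12)|exact: (entails_Prf_setUr PR S12 S1phi_S2)].
Qed.

Theorem corollary1 (L : choiceType) (Atom : Type) (atoms : L -> Atom -> Prop)
  (st : setting L) :
  pre_relevance atoms (restrict_empty st) ->
  forall Sm : sem, non_interference atoms st Sm.
Proof.
move=> PR Sm S1 S2 phi S1phi_S2.
rewrite !(entails_restrict_empty st).
exact: non_interference_of_pre_relevance PR Sm S1 S2 phi S1phi_S2.
Qed.
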